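(* Let $\Gamma_1,\Gamma_2$ be finite connected graphs, each having $1$ as an eigenvalue of its normalized Laplacian, with eigenfunctions $f^1$ on $\Gamma_1$ and $f^2$ on $\Gamma_2$. Assume $f^1(p_1)=f^2(p_2)$ for some vertices $p_1\in\Gamma_1$, $p_2\in\Gamma_2$. Let $\Gamma$ be the graph obtained from the disjoint union of $\Gamma_1$ and $\Gamma_2$ by identifying $p_1$ with $p_2$. Then $1$ is an eigenvalue of the normalized Laplacian of $\Gamma$, with an eigenfunction equal to $f^1$ on $\Gamma_1$ and to $f^2$ on $\Gamma_2$.
   Context: For a finite simple graph without isolated vertices, write $i\sim j$ for adjacency and $n_i$ for the degree of $i$. The normalized Laplacian acts on real functions $v$ on the vertices by $\Delta v(i)=v(i)-\frac{1}{n_i}\sum_{j\sim i}v(j)$; $\lambda$ is an eigenvalue with eigenfunction $u$ if $u\not\equiv 0$ and $\frac{1}{n_i}\sum_{j\sim i}u(j)=(1-\lambda)u(i)$ for all $i$. For $\lambda=1$ this says $\sum_{j\sim i}u(j)=0$ for all $i$. *)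

From mathcomp Require Import all_boot all_order all_algebra.
From mathcomp Require Import reals.
Set Implicit Arguments. Unset Strict Implicit. Unset Printing Implicit Defensive.
Import Order.TTheory GRing.Theory Num.Theory.
Local Open Scope ring_scope.

Definition simple_graph (T : finType) (E : rel T) : Prop :=
  symmetric E /\ irreflexive E.

Definition no_isolated (T : finType) (E : rel T) : Prop :=
  forall i : T, exists j, E i j.

Definition connected_graph (T : finType) (E : rel T) : Prop :=
  forall a b : T, connect E a b.

Definition deg (T : finType) (E : rel T) (i : T) : nat := #|[pred j | E i j]|.

Definition nlap_eigenfun (R : realType) (T : finType) (E : rel T)
    (lam : R) (u : T -> R) : Prop :=
  (exists i, u i != 0) /\
  forall i : T, (deg E i)%:R^-1 * (\sum_(j | E i j) u j) = (1 - lam) * u i.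

(* Wedge (one-point union) of two graphs, identifying p1 in T1 with p2 in T2.
   Vertex set: T1 + (T2 minus p2). *)
Definition wedge_vert (T1 T2 : finType) (p2 : T2) : finType :=
  (T1 + {x : T2 | x != p2})%type.

Definition wedge_inl (T1 T2 : finType) (p2 : T2) (a : T1) : wedge_vert T1 p2 := inl a.

Definition wedge_inr (T1 T2 : finType) (p1 : T1) (p2 : T2) (b : T2)
  : wedge_vert T1 p2 :=
  match insub b with Some y => inr y | None => inl p1 end.

Definition wedge_rel (T1 T2 : finType) (E1 : rel T1) (E2 : rel T2)
    (p1 : T1) (p2 : T2) : rel (wedge_vert T1 p2) :=
  fun u v =>
    [exists a, exists b, [&& u == wedge_inl p2 a, v == wedge_inl p2 b & E1 a b]]
    || [exists a, exists b,
         [&& u == wedge_inr p1 p2 a, v == wedge_inr p1 p2 b & E2 a b]].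

Arguments wedge_inl {T1 T2} p2 a.
Arguments wedge_inr {T1 T2} p1 p2 b.
Arguments wedge_rel {T1 T2} E1 E2 p1 p2 _ _.

From mathcomp Require Import all_boot all_order all_algebra.
From mathcomp Require Import reals.
Import Order.TTheory GRing.Theory Num.Theory.
Local Open Scope ring_scope.

(* For the eigenvalue 1 the eigen-equation says that [u] sums to zero over every
   neighbourhood.  On the wedge, the neighbourhood of a vertex splits into its
   neighbours coming from the first graph and those coming from the second; each
   part is empty or a full neighbourhood of one of the two graphs, so the glued
   function again sums to zero. *)

Lemma big_exists_inj {R : Type} {idx : R} {op : Monoid.com_law idx}
    {A B : finType} {g : A -> B} (P : pred A) (F : B -> R) :
  injective g ->
  \big[op/idx]_(v | [exists b, (v == g b) && P b]) F v
    = \big[op/idx]_(b | P b) F (g b).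
Proof.
move=> g_inj; rewrite -[RHS]big_image big_uniq ?map_inj_uniq ?enum_uniq //.
apply: eq_bigl => v; apply/existsP/imageP => [[b /andP[/eqP -> Pb]]|[b Pb ->]].
  by exists b.
by exists b; rewrite eqxx.
Qed.

Lemma nlap_eigenfun1P {R : realType} {T : finType} (E : rel T) (u : T -> R) :
  nlap_eigenfun E 1 u
    <-> (exists i, u i != 0) /\ forall i, \sum_(j | E i j) u j = 0.
Proof.
rewrite /nlap_eigenfun; split=> -[nz sum_u]; split=> // i; last first.
  by rewrite sum_u mulr0 subrr mul0r.
move: (sum_u i); rewrite subrr mul0r => /eqP; rewrite mulf_eq0 invr_eq0.
case/orP=> [deg0|/eqP //]; apply: big_pred0 => j; apply/negP => Eij.
by move: deg0; rewrite pnatr_eq0 -leqn0 leqNgt => /negP; apply; apply/card_gt0P; exists j.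
Qed.

Section Wedge.

Variables (T1 T2 : finType) (E1 : rel T1) (E2 : rel T2) (p1 : T1) (p2 : T2).

Local Notation V := (wedge_vert T1 p2).
Local Notation inl1 := (@wedge_inl T1 T2 p2).
Local Notation inr2 := (@wedge_inr T1 T2 p1 p2).

Definition wedge_edge1 (u v : V) : bool :=
  [exists a, exists b, [&& u == inl1 a, v == inl1 b & E1 a b]].

Definition wedge_edge2 (u v : V) : bool :=
  [exists a, exists b, [&& u == inr2 a, v == inr2 b & E2 a b]].

Lemma wedge_inl_inj : injective inl1.
Proof. by move=> a b []. Qed.

Lemma wedge_inr_p2 : inr2 p2 = inl1 p1.
Proof. by rewrite /wedge_inr insubF ?eqxx. Qed.

Lemma wedge_inr_inl b a : inr2 b = inl1 a -> b = p2.
Proof. by rewrite /wedge_inr; case: insubP => // /negPn/eqP. Qed.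

Lemma wedge_inr_inj : injective inr2.
Proof.
move=> a b; rewrite /wedge_inr.
case: insubP => [y _ <-|]; case: insubP => [z _ <-|] //; first by case=> ->.
by rewrite !negbK => /eqP -> /eqP ->.
Qed.

Lemma wedge_edge_disjoint u : irreflexive E2 ->
  [disjoint wedge_edge1 u & wedge_edge2 u].
Proof.
move=> E2_irr; apply/pred0P => v /=; apply/negP => /andP[].
case/existsP=> a /existsP[b /and3P[/eqP ua /eqP vb _]].
case/existsP=> a' /existsP[b' /and3P[/eqP ua' /eqP vb' Ea'b']].
have a'_p2 : a' = p2 by apply: (@wedge_inr_inl _ a); rewrite -ua' ua.
have b'_p2 : b' = p2 by apply: (@wedge_inr_inl _ b); rewrite -vb' vb.
by move: Ea'b'; rewrite a'_p2 b'_p2 E2_irr.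
Qed.

Variables (R : realType) (F : V -> R).

Lemma sum_wedge_rel u : irreflexive E2 ->
  \sum_(v | wedge_rel E1 E2 p1 p2 u v) F v
    = \sum_(v | wedge_edge1 u v) F v + \sum_(v | wedge_edge2 u v) F v.
Proof. by move=> E2_irr; rewrite -bigU ?wedge_edge_disjoint. Qed.

Lemma sum_wedge_edge1 u :
  (forall a, \sum_(b | E1 a b) F (inl1 b) = 0) ->
  \sum_(v | wedge_edge1 u v) F v = 0.
Proof.
move=> sum1; case: u => [a|y].
  rewrite -[RHS](sum1 a) -[RHS](big_exists_inj _ _ wedge_inl_inj).
  apply: eq_bigl => v; apply/existsP/existsP => [[a' /existsP[b]]|[b Eb]].
    by case/and3P=> /eqP [<-] vb Eab; exists b; rewrite vb.
  by exists a; apply/existsP; exists b; rewrite eqxx.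
by apply: big_pred0 => v; apply/existsP => -[a /existsP[b /and3P[]]].
Qed.

Lemma sum_wedge_edge2 u :
  (forall a, \sum_(b | E2 a b) F (inr2 b) = 0) ->
  \sum_(v | wedge_edge2 u v) F v = 0.
Proof.
move=> sum2; have [/existsP[c /eqP ->]|u_out] := boolP [exists c, u == inr2 c].
  rewrite -[RHS](sum2 c) -[RHS](big_exists_inj _ _ wedge_inr_inj).
  apply: eq_bigl => v; apply/existsP/existsP => [[a /existsP[b]]|[b Eb]].
    by case/and3P=> /eqP/wedge_inr_inj <- vb Ecb; exists b; rewrite vb.
  by exists c; apply/existsP; exists b; rewrite eqxx.
apply: big_pred0 => v; apply/existsP => -[a /existsP[b /and3P[ua _ _]]].
by move/existsP: u_out; apply; exists a.
Qed.

End Wedge.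

Definition wedge_fun {R : Type} {T1 T2 : finType} {p2 : T2}
    (f1 : T1 -> R) (f2 : T2 -> R) (v : wedge_vert T1 p2) : R :=
  match v with inl a => f1 a | inr y => f2 (val y) end.

Lemma wedge_fun_inr {R : Type} {T1 T2 : finType} {p1 : T1} {p2 : T2}
    {f1 : T1 -> R} {f2 : T2 -> R} :
  f1 p1 = f2 p2 -> forall b, wedge_fun f1 f2 (wedge_inr p1 p2 b) = f2 b.
Proof.
move=> f12 b; have [->|b_p2] := eqVneq b p2; first by rewrite wedge_inr_p2.
by rewrite /wedge_inr insubT.
Qed.

Theorem mainTheorem8 (R : realType) (T1 T2 : finType)
    (E1 : rel T1) (E2 : rel T2)
    (hs1 : simple_graph E1) (hs2 : simple_graph E2)
    (hn1 : no_isolated E1) (hn2 : no_isolated E2)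
    (hc1 : connected_graph E1) (hc2 : connected_graph E2)
    (f1 : T1 -> R) (f2 : T2 -> R)
    (hf1 : nlap_eigenfun E1 1 f1) (hf2 : nlap_eigenfun E2 1 f2)
    (p1 : T1) (p2 : T2) (hp : f1 p1 = f2 p2) :
  exists f : wedge_vert T1 p2 -> R,
    nlap_eigenfun (wedge_rel E1 E2 p1 p2) 1 f /\
    (forall a : T1, f (wedge_inl p2 a) = f1 a) /\
    (forall b : T2, f (wedge_inr p1 p2 b) = f2 b).
Proof.
have [[i f1i_neq0] sum1] := (nlap_eigenfun1P E1 f1).1 hf1.
have [_ sum2] := (nlap_eigenfun1P E2 f2).1 hf2.
have f_inr := wedge_fun_inr hp.
exists (wedge_fun f1 f2); split; last by split.
apply/nlap_eigenfun1P; split; first by exists (wedge_inl p2 i).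
move=> u; have [_ E2_irr] := hs2.
rewrite sum_wedge_rel // sum_wedge_edge1 // sum_wedge_edge2 ?addr0 // => a.
by under eq_bigr do rewrite f_inr; exact: sum2.
Qed.
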